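(* The reactivity problem for DSRT (given a deterministic SRT $\mathcal{S}$, decide whether $\mathcal{S}$ is reactive) is undecidable.
   Context: A linear group is a triple $\mathbf{G}=(D,\leq,+)$ where $D$ is an infinite set, $\leq$ is a total order on $D$, and $(D,+)$ is a group with identity $0$. For finite label sets $\Sigma,\Gamma$, a $(\Sigma,\Gamma,\mathbf{G})$-SRT is a tuple $\mathcal{S}=(Q,q_0,k,R_0,\Delta)$: $Q$ finite set of states, $q_0\in Q$, $k\in\mathbb{N}$ registers, initial values $R_0\in D^k$, transitions $\Delta\subseteq Q\times\Sigma\times\{>,=,<\}^k\times\{\mathsf{old},\mathsf{new},\mathsf{add}\}^k\times\{1,\dots,k\}\times\Gamma\times Q$. A transition $(q,\sigma,l,m,u,\gamma,q')$ enables the step $(q,R)\xrightarrow[(\gamma,d')]{(\sigma,d)}(q',R')$ iff (1) for every $i$, $d>R[i]$, $d=R[i]$ or $d<R[i]$ according as $l[i]$ is $>$, $=$, $<$; (2) $R'[i]=R[i]$, $d$, or $R[i]+d$ according as $m[i]$ is $\mathsf{old}$, $\mathsf{new}$, $\mathsf{add}$; (3) $d'=R'[u]$. A run over $s\in(\Sigma\times D)^*$ of length $n$ generating $t\in(\Gamma\times D)^*$ is a sequence of $n$ enabled steps from $(q_0,R_0)$ reading $s[i]$ and emitting $t[i]$. $s\otimes t$ is the word with $i$-th letter $(s[i],t[i])$; $[\![\mathcal{S}]\!]=\{s\otimes t:\text{there is a run over }s\text{ generating }t\}$. An SRT is deterministic (DSRT) if any two distinct transitions $(q_1,\sigma_1,l_1,\dots)$,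 $(q_2,\sigma_2,l_2,\dots)$ satisfy $q_1\neq q_2$ or $\sigma_1\neq\sigma_2$ or $l_1\neq l_2$. $\mathcal{S}$ is reactive if for every $s\in(\Sigma\times D)^*$ there exists $t$ with $s\otimes t\in[\![\mathcal{S}]\!]$. *)

From Stdlib Require Import ZArith List Arith.
Import ListNotations.
Open Scope Z_scope.

Inductive cmp : Type := CGt | CEq | CLt.
Inductive upd : Type := UOld | UNew | UAdd.

(* States are 0..nQ-1, input labels 0..nSig-1 (= Sigma), output labels
   0..nGam-1 (= Gamma), registers are indexed 0..k-1 (so the output register
   u ranges over {0,...,k-1}, i.e. the paper's {1,...,k} shifted by one). *)
Record trans : Type := mkTrans {
  t_src : nat;
  t_in : nat;
  t_test : list cmp;
  t_upd : list upd;
  t_out_reg : nat;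
  t_out : nat;
  t_dst : nat }.

Record SRT : Type := mkSRT {
  nQ : nat;
  nSig : nat;
  nGam : nat;
  q0 : nat;
  nreg : nat;
  R0 : list Z;
  Delta : list trans }.

Definition wf_SRT (S : SRT) : Prop :=
  (q0 S < nQ S)%nat /\ length (R0 S) = nreg S /\
  Forall (fun t =>
    (t_src t < nQ S)%nat /\ (t_in t < nSig S)%nat /\
    length (t_test t) = nreg S /\ length (t_upd t) = nreg S /\
    (t_out_reg t < nreg S)%nat /\ (t_out t < nGam S)%nat /\
    (t_dst t < nQ S)%nat) (Delta S).

Definition deterministic (S : SRT) : Prop :=
  forall t1 t2, In t1 (Delta S) -> In t2 (Delta S) -> t1 <> t2 ->
    (t_src t1, t_in t1, t_test t1) <> (t_src t2, t_in t2, t_test t2).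

Definition cmp_ok (c : cmp) (r d : Z) : Prop :=
  match c with
  | CGt => d > r
  | CEq => d = r
  | CLt => d < r
  end.

Definition tests_ok (l : list cmp) (R : list Z) (d : Z) : Prop :=
  Forall2 (fun c r => cmp_ok c r d) l R.

Definition upd_val (m : upd) (r d : Z) : Z :=
  match m with
  | UOld => r
  | UNew => d
  | UAdd => r + d
  end.

Definition update (m : list upd) (R : list Z) (d : Z) : list Z :=
  map (fun p => upd_val (fst p) (snd p) d) (combine m R).

Definition config : Type := (nat * list Z)%type.

Definition step (S : SRT) (c : config) (a : nat * Z) (b : nat * Z)
    (c' : config) : Prop :=
  exists t, In t (Delta S) /\
    t_src t = fst c /\ t_in t = fst a /\
    length (t_test t) = length (snd c) /\
    tests_ok (t_test t) (snd c) (snd a) /\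
    length (t_upd t) = length (snd c) /\
    snd c' = update (t_upd t) (snd c) (snd a) /\
    snd b = nth (t_out_reg t) (snd c') 0 /\
    fst b = t_out t /\ fst c' = t_dst t.

Inductive run_from (S : SRT) : config -> list (nat * Z) -> list (nat * Z) -> Prop :=
  | run_nil c : run_from S c [] []
  | run_cons c a b c' s t :
      step S c a b c' -> run_from S c' s t -> run_from S c (a :: s) (b :: t).

Definition sem (S : SRT) (w : list ((nat * Z) * (nat * Z))) : Prop :=
  run_from S (q0 S, R0 S) (map fst w) (map snd w).

Definition reactive (S : SRT) : Prop :=
  forall s : list (nat * Z), Forall (fun a => (fst a < nSig S)%nat) s ->
    exists t : list (nat * Z), length t = length s /\ sem S (combine s t).

Inductive rf : Type :=
  | RZero : rf
  | RSucc : rf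
  | RProj : nat -> rf
  | RComp : rf -> list rf -> rf
  | RPrim : rf -> rf -> rf
  | RMu : rf -> rf.

Inductive eval : rf -> list nat -> nat -> Prop :=
  | ev_zero v : eval RZero v 0
  | ev_succ v : eval RSucc v (S (hd 0%nat v))
  | ev_proj i v : eval (RProj i) v (nth i v 0%nat)
  | ev_comp f gs v ys y : evals gs v ys -> eval f ys y -> eval (RComp f gs) v y
  | ev_prim0 f g v y : eval f v y -> eval (RPrim f g) (0%nat :: v) y
  | ev_primS f g n v z y :
      eval (RPrim f g) (n :: v) z -> eval g (n :: z :: v) y ->
      eval (RPrim f g) (S n :: v) y
  | ev_mu f v n :
      eval f (n :: v) 0%nat ->
      (forall m, (m < n)%nat -> exists k, eval f (m :: v) (S k)) ->
      eval (RMu f) v n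
with evals : list rf -> list nat -> list nat -> Prop :=
  | evs_nil v : evals [] v []
  | evs_cons g gs v y ys : eval g v y -> evals gs v ys -> evals (g :: gs) v (y :: ys).

(* Cantor pairing *)
Definition npair (x y : nat) : nat := ((x + y) * (x + y + 1)) / 2 + y.

Fixpoint enc_list {A} (e : A -> nat) (l : list A) : nat :=
  match l with
  | [] => 0
  | x :: l' => S (npair (e x) (enc_list e l'))
  end.

(* zig-zag encoding of integers *)
Definition enc_Z (z : Z) : nat :=
  if Z.leb 0 z then (2 * Z.to_nat z)%nat else (2 * Z.to_nat (- z) - 1)%nat.

Definition enc_cmp (c : cmp) : nat := match c with CGt => 0 | CEq => 1 | CLt => 2 end.
Definition enc_upd (m : upd) : nat := match m with UOld => 0 | UNew => 1 | UAdd => 2 end.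

Definition enc_trans (t : trans) : nat :=
  enc_list (fun x => x)
    [t_src t; t_in t; enc_list enc_cmp (t_test t); enc_list enc_upd (t_upd t);
     t_out_reg t; t_out t; t_dst t].

Definition encode_SRT (S : SRT) : nat :=
  enc_list (fun x => x)
    [nQ S; nSig S; nGam S; q0 S; nreg S; enc_list enc_Z (R0 S);
     enc_list enc_trans (Delta S)].

From Stdlib Require Import ZArith List Arith Lia.
Import ListNotations.
Open Scope nat_scope.

(* A counter machine (increment, and decrement-or-jump-if-zero) is simulated by
   a deterministic SRT over (Z, <=, +): the counters are registers, three more
   registers hold the constants 1, -1 and 0, and every input value is compared
   with the constant the current instruction expects, a wrong value leading to a
   sink that accepts everything.  In the halting state the input 1 has no
   transition when the output counter holds 1, so the simulating SRT is reactive
   iff the machine does not halt with output 1.  A purported decider p is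
   precomposed with a recursive function rebuilding the code of an SRT from data
   that SRT stores in its own initial registers, and compiled to a counter
   machine; the SRT simulating that machine is then reactive iff p says it is
   not. *)

Definition rf_nested_ind (Pr : rf -> Prop) (H0 : Pr RZero) (H1 : Pr RSucc)
  (H2 : forall i, Pr (RProj i))
  (H3 : forall f gs, Pr f -> Forall Pr gs -> Pr (RComp f gs))
  (H4 : forall f g, Pr f -> Pr g -> Pr (RPrim f g))
  (H5 : forall f, Pr f -> Pr (RMu f)) : forall f, Pr f :=
  fix F f := match f with
  | RZero => H0 | RSucc => H1 | RProj i => H2 i
  | RComp f gs => H3 f gs (F f)
      ((fix G gs := match gs return Forall Pr gs with
        | [] => Forall_nil Pr
        | g :: gs' => @Forall_cons _ Pr g gs' (F g) (G gs') end) gs)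
  | RPrim f g => H4 f g (F f) (F g)
  | RMu f => H5 f (F f) end.

Lemma evals_functional gs :
  Forall (fun f => forall v y y', eval f v y -> eval f v y' -> y = y') gs ->
  forall v ys ys', evals gs v ys -> evals gs v ys' -> ys = ys'.
Proof.
  induction 1; intros v ys ys' H1 H2; inversion H1; inversion H2; subst; auto.
  f_equal; eauto.
Qed.

Lemma eval_functional f v y y' : eval f v y -> eval f v y' -> y = y'.
Proof.
  revert v y y'.
  induction f using rf_nested_ind; intros v y y' H1 H2.
  1-3: inversion H1; inversion H2; subst; auto.
  - inversion H1; inversion H2; subst.
    assert (ys = ys0) by (eapply evals_functional; eauto). subst. eauto.
  - destruct v as [|n v]; [inversion H1|].
    revert y y' H1 H2. induction n; intros y y' H1 H2.
    + inversion H1; inversion H2; subst; eauto.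
    + inversion H1; inversion H2; subst.
      assert (z = z0) by eauto. subst. eauto.
  - inversion H1 as [| | | | | |? ? ? Hy Hbelow]; inversion H2 as [| | | | | |? ? ? Hy' Hbelow']; subst.
    destruct (lt_eq_lt_dec y y') as [[Hlt|Heq]|Hlt]; auto.
    + destruct (Hbelow' _ Hlt) as [k Hk]. specialize (IHf _ _ _ Hy Hk). discriminate.
    + destruct (Hbelow _ Hlt) as [k Hk]. specialize (IHf _ _ _ Hy' Hk). discriminate.
Qed.

Lemma eval_proj_eq i v y : nth i v 0 = y -> eval (RProj i) v y.
Proof. intros <-. constructor. Qed.

Lemma eval_succ_eq v y : y = S (hd 0 v) -> eval RSucc v y.
Proof. intros ->. constructor. Qed.

Lemma eval_comp1 f g v a y : eval g v a -> eval f [a] y -> eval (RComp f [g]) v y.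
Proof. intros. econstructor; [|eauto]. repeat constructor; auto. Qed.

Lemma eval_comp2 f g h v a b y :
  eval g v a -> eval h v b -> eval f [a; b] y -> eval (RComp f [g; h]) v y.
Proof. intros. econstructor; [|eauto]. repeat constructor; auto. Qed.

Definition rf_add : rf := RPrim (RProj 0) (RComp RSucc [RProj 1]).

Lemma eval_add x y : eval rf_add [x; y] (x + y).
Proof.
  induction x.
  - constructor. apply eval_proj_eq. reflexivity.
  - econstructor; [exact IHx|]. eapply eval_comp1.
    + apply eval_proj_eq. reflexivity.
    + apply eval_succ_eq. reflexivity.
Qed.

Fixpoint triangle (n : nat) : nat := match n with 0 => 0 | S m => S m + triangle m end.

Definition rf_triangle : rf := RPrim RZero (RComp rf_add [RComp RSucc [RProj 0]; RProj 1]).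

Lemma eval_triangle n : eval rf_triangle [n] (triangle n).
Proof.
  induction n.
  - repeat constructor.
  - econstructor; [exact IHn|]. eapply eval_comp2; [| |apply eval_add].
    + eapply eval_comp1; [apply eval_proj_eq | apply eval_succ_eq]; reflexivity.
    + apply eval_proj_eq; reflexivity.
Qed.

Lemma npair_triangle x y : npair x y = triangle (x + y) + y.
Proof.
  assert (Htri : forall n, triangle n * 2 = n * (n + 1)) by (induction n; simpl; lia).
  unfold npair. f_equal. rewrite <- Htri. apply Nat.div_mul. lia.
Qed.

Definition rf_npair : rf := RComp rf_add [RComp rf_triangle [rf_add]; RProj 1].

Lemma eval_npair x y : eval rf_npair [x; y] (npair x y).
Proof.
  rewrite npair_triangle. eapply eval_comp2; [| |apply eval_add].
  - eapply eval_comp1; [apply eval_add | apply eval_triangle].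
  - apply eval_proj_eq; reflexivity.
Qed.

Fixpoint rf_const (c : nat) : rf :=
  match c with 0 => RZero | S c' => RComp RSucc [rf_const c'] end.

Lemma eval_const c v : eval (rf_const c) v c.
Proof.
  induction c; simpl; [constructor|].
  eapply eval_comp1; [exact IHc | apply eval_succ_eq; reflexivity].
Qed.

(* [rf_cons F G] computes the code [S (npair a b)] of a list with head code [a]
   and tail code [b], as in [enc_list]. *)
Definition rf_cons (F G : rf) : rf := RComp RSucc [RComp rf_npair [F; G]].

Lemma eval_cons F G v a b :
  eval F v a -> eval G v b -> eval (rf_cons F G) v (S (npair a b)).
Proof.
  intros. eapply eval_comp1; [eapply eval_comp2; eauto; apply eval_npair|].
  apply eval_succ_eq; reflexivity.
Qed.

Definition rf_double (F : rf) : rf := RComp rf_add [F; F].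

Lemma eval_double F v a : eval F v a -> eval (rf_double F) v (2 * a).
Proof.
  intros. eapply eval_comp2; eauto. replace (2 * a) with (a + a) by lia. apply eval_add.
Qed.

Lemma enc_Z_of_nat a : enc_Z (Z.of_nat a) = 2 * a.
Proof.
  unfold enc_Z. replace (0 <=? Z.of_nat a)%Z with true by (symmetry; apply Z.leb_le; lia).
  rewrite Nat2Z.id. reflexivity.
Qed.

(* [34] is the code of the list [[1; -1; 0]]. *)
Definition rf_padding : rf := RPrim (rf_const 34) (rf_cons RZero (RProj 1)).

Lemma eval_padding k :
  eval rf_padding [k] (enc_list enc_Z (repeat 0%Z k ++ [1; -1; 0]%Z)).
Proof.
  induction k.
  - constructor. apply eval_const.
  - econstructor; [exact IHk|]. apply eval_cons; [constructor | apply eval_proj_eq; reflexivity].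
Qed.

Definition rf_encode_SRT : rf :=
  let R0_code := rf_cons (rf_const 0) (rf_cons (rf_double (RProj 0))
      (rf_cons (rf_double (RProj 1)) (rf_cons (rf_double (RProj 2))
      (rf_cons (rf_double (RProj 3)) (RComp rf_padding [RProj 3]))))) in
  rf_cons (RProj 0) (rf_cons (rf_const 1) (rf_cons (rf_const 1) (rf_cons (rf_const 0)
    (rf_cons (RProj 1) (rf_cons R0_code (rf_cons (RProj 2) (rf_const 0))))))).

(* The arguments are exactly the values kept in registers 1-4 of the simulating
   SRTs built below, so a machine can rebuild the code of its own simulator. *)
Lemma eval_encode_SRT S a :
  nSig S = 1 -> nGam S = 1 -> q0 S = 0 ->
  R0 S = map Z.of_nat [0; nQ S; nreg S; enc_list enc_trans (Delta S); a]
         ++ repeat 0%Z a ++ [1; -1; 0]%Z ->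
  eval rf_encode_SRT [nQ S; nreg S; enc_list enc_trans (Delta S); a] (encode_SRT S).
Proof.
  intros HSig HGam Hq0 HR0. unfold encode_SRT, rf_encode_SRT.
  rewrite HSig, HGam, Hq0, HR0. simpl enc_list. rewrite !enc_Z_of_nat.
  repeat apply eval_cons.
  all: first [ apply eval_const | apply eval_proj_eq; reflexivity
             | apply eval_double, eval_proj_eq; reflexivity
             | eapply eval_comp1; [apply eval_proj_eq; reflexivity | apply eval_padding] ].
Qed.

Inductive instr : Type := INC (r : nat) | DECJZ (r j : nat).

Definition regs : Type := nat -> nat.

Definition set_reg (R : regs) (r x : nat) : regs := fun i => if i =? r then x else R i.

Inductive cm_step (P : list instr) : nat * regs -> nat * regs -> Prop :=
  | cm_inc pc R r : nth_error P pc = Some (INC r) ->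
      cm_step P (pc, R) (S pc, set_reg R r (S (R r)))
  | cm_jump pc R r j : nth_error P pc = Some (DECJZ r j) -> R r = 0 ->
      cm_step P (pc, R) (j, R)
  | cm_dec pc R r j k : nth_error P pc = Some (DECJZ r j) -> R r = S k ->
      cm_step P (pc, R) (S pc, set_reg R r k).

Inductive cm_steps (P : list instr) : nat * regs -> nat * regs -> Prop :=
  | cm_refl c : cm_steps P c c
  | cm_next c1 c2 c3 : cm_step P c1 c2 -> cm_steps P c2 c3 -> cm_steps P c1 c3.

Lemma cm_steps_trans P c1 c2 c3 : cm_steps P c1 c2 -> cm_steps P c2 c3 -> cm_steps P c1 c3.
Proof. induction 1; intros; auto. econstructor; eauto. Qed.

Lemma cm_steps_snoc P c1 c2 c3 : cm_steps P c1 c2 -> cm_step P c2 c3 -> cm_steps P c1 c3.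
Proof. intros. eapply cm_steps_trans; eauto. repeat econstructor; eauto. Qed.

Lemma cm_step_functional P c c1 c2 : cm_step P c c1 -> cm_step P c c2 -> c1 = c2.
Proof. intros H1 H2. inversion H1; subst; inversion H2; subst; congruence. Qed.

Lemma cm_halted_unique P c c1 c2 : cm_steps P c c1 -> cm_steps P c c2 ->
  nth_error P (fst c1) = None -> nth_error P (fst c2) = None -> c1 = c2.
Proof.
  intros H. revert c2. induction H as [c|c c' c1 Hs Hss IH]; intros c2 H2 N1 N2.
  - inversion H2 as [|? c'' ? Hs']; subst; auto.
    inversion Hs'; subst; simpl in N1; congruence.
  - inversion H2 as [|? c'' ? Hs' Hss']; subst.
    + inversion Hs; subst; simpl in N2; congruence.
    + assert (c' = c'') by (eapply cm_step_functional; eauto). subst. auto.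
Qed.

Lemma set_reg_same R r x : set_reg R r x r = x.
Proof. unfold set_reg. rewrite Nat.eqb_refl. auto. Qed.

Lemma set_reg_other R r x i : i <> r -> set_reg R r x i = R i.
Proof. unfold set_reg. intros H. apply Nat.eqb_neq in H. rewrite H. auto. Qed.

Ltac simpl_set_reg :=
  unfold set_reg in *; repeat match goal with |- context [Nat.eqb ?a ?b] =>
    destruct (Nat.eqb_spec a b); try (exfalso; congruence); try (exfalso; lia) end.

Lemma cm_steps_inc P pc pc' R r : nth_error P pc = Some (INC r) -> pc' = S pc ->
  cm_steps P (pc, R) (pc', set_reg R r (S (R r))).
Proof. intros; subst. econstructor; [constructor; eauto | constructor]. Qed.

Lemma cm_steps_jump P pc R r j : nth_error P pc = Some (DECJZ r j) -> R r = 0 ->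
  cm_steps P (pc, R) (j, R).
Proof. intros. econstructor; [eapply cm_jump; eauto | constructor]. Qed.

Lemma cm_steps_dec P pc pc' R r j k : nth_error P pc = Some (DECJZ r j) -> R r = S k ->
  pc' = S pc -> cm_steps P (pc, R) (pc', set_reg R r k).
Proof. intros; subst. econstructor; [eapply cm_dec; eauto | constructor]. Qed.

Definition code_at (P : list instr) (pc : nat) (c : list instr) : Prop :=
  forall i x, nth_error c i = Some x -> nth_error P (pc + i) = Some x.

Ltac fetch Hc i name := pose proof (Hc i _ eq_refl) as name; cbn in name.

Lemma code_at_app P pc a b :
  code_at P pc (a ++ b) -> code_at P pc a /\ code_at P (pc + length a) b.
Proof.
  intros H. split; intros i x E.
  - apply H. rewrite nth_error_app1; auto. apply nth_error_Some. congruence.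
  - rewrite <- Nat.add_assoc. apply H. rewrite nth_error_app2 by lia.
    replace (length a + i - length a) with i by lia. auto.
Qed.

Lemma code_at_shift P pc pc' c : code_at P pc c -> pc = pc' -> code_at P pc' c.
Proof. intros; subst; auto. Qed.

(* Register 0 is kept at 0, so [DECJZ 0 j] is an unconditional jump. *)
Definition cm_clear r pc := [DECJZ r (pc + 2); DECJZ 0 pc].

Lemma cm_clear_spec P pc r R : code_at P pc (cm_clear r pc) -> R 0 = 0 -> r <> 0 ->
  exists R', cm_steps P (pc, R) (pc + 2, R') /\ R' r = 0 /\
    forall x, x <> r -> R' x = R x.
Proof.
  intros Hc. fetch Hc 0 I0. fetch Hc 1 I1. rewrite Nat.add_0_r in I0.
  remember (R r) as m. revert R Heqm. induction m; intros R Hm H0 Hr.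
  - exists R. split; [apply cm_steps_jump with r; auto | auto].
  - destruct (IHm (set_reg R r m)) as [R' [H1 [H2 H3]]]; [simpl_set_reg; auto..|].
    exists R'. split; [|split; auto].
    + eapply cm_steps_trans. { apply cm_steps_dec with (r := r) (j := pc + 2) (k := m) (pc' := pc + 1); auto; lia. }
      eapply cm_steps_trans. { apply cm_steps_jump with (r := 0); [exact I1 | simpl_set_reg; auto]. }
      exact H1.
    + intros x Hx. rewrite H3; auto. simpl_set_reg; auto.
Qed.

Definition cm_move src dst pc := [DECJZ src (pc + 3); INC dst; DECJZ 0 pc].

Lemma cm_move_spec P pc src dst R : code_at P pc (cm_move src dst pc) -> R 0 = 0 ->
  src <> dst -> src <> 0 -> dst <> 0 ->
  exists R', cm_steps P (pc, R) (pc + 3, R') /\ R' src = 0 /\ R' dst = R dst + R src /\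
    forall x, x <> src -> x <> dst -> R' x = R x.
Proof.
  intros Hc. fetch Hc 0 I0. fetch Hc 1 I1. fetch Hc 2 I2. rewrite Nat.add_0_r in I0.
  remember (R src) as m. revert R Heqm. induction m; intros R Hm H0 Hsd Hs Hd.
  - exists R. split; [apply cm_steps_jump with src; auto | split; auto].
  - set (R1 := set_reg (set_reg R src m) dst (S (set_reg R src m dst))).
    destruct (IHm R1) as [R' [H1 [H2 [H3 H4]]]]; [unfold R1; simpl_set_reg; auto..|].
    exists R'. split; [|split; [auto | split]].
    + eapply cm_steps_trans. { apply cm_steps_dec with (r := src) (j := pc + 3) (k := m) (pc' := pc + 1); auto; lia. }
      eapply cm_steps_trans. { apply cm_steps_inc with (r := dst) (pc' := pc + 2); [exact I1 | lia]. }
      eapply cm_steps_trans. { apply cm_steps_jump with (r := 0); [exact I2 | simpl_set_reg; auto]. }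
      exact H1.
    + rewrite H3. unfold R1. simpl_set_reg; lia.
    + intros x Hx1 Hx2. rewrite H4; auto. unfold R1. simpl_set_reg; auto.
Qed.

(* [src] is moved into both [dst] and [tmp], then [tmp] back into [src]. *)
Definition cm_copy src dst tmp pc :=
  cm_clear dst pc ++ cm_clear tmp (pc + 2) ++
  [DECJZ src (pc + 8); INC dst; INC tmp; DECJZ 0 (pc + 4)] ++ cm_move tmp src (pc + 8).

Lemma length_cm_copy src dst tmp pc : length (cm_copy src dst tmp pc) = 11.
Proof. reflexivity. Qed.

Lemma cm_copy_loop_spec P pc src dst tmp : code_at P pc (cm_copy src dst tmp pc) ->
  src <> dst -> src <> tmp -> dst <> tmp -> src <> 0 -> dst <> 0 -> tmp <> 0 ->
  forall R, R 0 = 0 ->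
  exists R', cm_steps P (pc + 4, R) (pc + 8, R') /\ R' src = 0 /\
    R' dst = R dst + R src /\ R' tmp = R tmp + R src /\
    forall x, x <> src -> x <> dst -> x <> tmp -> R' x = R x.
Proof.
  intros Hc Hsd Hst Hdt Hs Hd Ht.
  fetch Hc 4 I4. fetch Hc 5 I5. fetch Hc 6 I6. fetch Hc 7 I7.
  intros R. remember (R src) as m. revert R Heqm.
  induction m; intros R Hm H0.
  - exists R. split; [apply cm_steps_jump with src; auto|]. repeat split; auto; lia.
  - set (R1 := set_reg R src m).
    set (R2 := set_reg R1 dst (S (R1 dst))).
    set (R3 := set_reg R2 tmp (S (R2 tmp))).
    destruct (IHm R3) as [R' [H1 [H2 [H3 [H4 H5]]]]]; [unfold R3, R2, R1; simpl_set_reg; auto..|].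
    exists R'. split; [|split; [auto | split; [|split]]].
    + eapply cm_steps_trans. { apply cm_steps_dec with (r := src) (j := pc + 8) (k := m) (pc' := pc + 5); auto; lia. }
      eapply cm_steps_trans. { apply cm_steps_inc with (r := dst) (pc' := pc + 6); [exact I5 | lia]. }
      eapply cm_steps_trans. { apply cm_steps_inc with (r := tmp) (pc' := pc + 7); [exact I6 | lia]. }
      eapply cm_steps_trans. { apply cm_steps_jump with (r := 0); [exact I7 | simpl_set_reg; auto]. }
      exact H1.
    + rewrite H3. unfold R3, R2, R1. simpl_set_reg; lia.
    + rewrite H4. unfold R3, R2, R1. simpl_set_reg; lia.
    + intros x Hx1 Hx2 Hx3. rewrite H5; auto. unfold R3, R2, R1. simpl_set_reg; auto.
Qed.

Lemma cm_copy_spec P pc src dst tmp R : code_at P pc (cm_copy src dst tmp pc) ->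
  src <> dst -> src <> tmp -> dst <> tmp -> src <> 0 -> dst <> 0 -> tmp <> 0 -> R 0 = 0 ->
  exists R', cm_steps P (pc, R) (pc + 11, R') /\ R' dst = R src /\
    forall x, x <> dst -> x <> tmp -> R' x = R x.
Proof.
  intros Hc Hsd Hst Hdt Hs Hd Ht H0.
  pose proof (cm_copy_loop_spec P pc src dst tmp Hc Hsd Hst Hdt Hs Hd Ht) as Hloop.
  unfold cm_copy in Hc.
  destruct (code_at_app _ _ _ _ Hc) as [C1 Hc1].
  destruct (code_at_app _ _ _ _ Hc1) as [C2 Hc2]. simpl length in Hc2.
  destruct (code_at_app _ _ _ _ Hc2) as [_ C4]. simpl length in C4.
  destruct (cm_clear_spec P pc dst R C1 H0 Hd) as [R1 [S1 [A1 B1]]].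
  destruct (cm_clear_spec P (pc + 2) tmp R1 C2) as [R2 [S2 [A2 B2]]]; auto.
  { rewrite B1; auto. }
  destruct (Hloop R2) as [R3 [S3 [A3 [B3 [D3 E3]]]]].
  { rewrite B2, B1; auto. }
  destruct (cm_move_spec P (pc + 8) tmp src R3) as [R4 [S4 [A4 [B4 D4]]]]; auto.
  { eapply code_at_shift; [exact C4 | lia]. }
  { rewrite E3, B2, B1; auto. }
  exists R4. split; [|split].
  - eapply cm_steps_trans; [exact S1|].
    eapply cm_steps_trans. { replace (pc + 2 + 2) with (pc + 4) in S2 by lia. exact S2. }
    eapply cm_steps_trans; [exact S3|]. replace (pc + 11) with (pc + 8 + 3) by lia. exact S4.
  - rewrite D4 by auto. rewrite B3, (B2 dst), (B2 src), A1, (B1 src) by auto. lia.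
  - intros x Hx1 Hx2. destruct (Nat.eq_dec x src).
    + subst. rewrite B4, A3, D3, A2, (B2 src), (B1 src) by auto. lia.
    + rewrite D4, E3, B2, B1 by auto. auto.
Qed.

(* [compile f n inp out fr pc] is code for [f] at arity [n], to be placed at
   address [pc] (jumps are absolute): the arguments are in registers
   [inp], ..., [inp + n - 1], the result goes to register [out], and only
   registers [>= fr] are used as scratch space. *)

Definition cm_load n inp i out fr pc :=
  if i <? n then cm_copy (inp + i) out fr pc else cm_clear out pc.

Fixpoint cm_load_list n inp (is : list nat) base fr pc : list instr :=
  match is with
  | [] => []
  | i :: is' => cm_load n inp i base fr pc ++
      cm_load_list n inp is' (S base) fr (pc + length (cm_load n inp i base fr pc))
  end.

Fixpoint compile_list (F : rf -> nat -> nat -> list instr) (gs : list rf) (base pc : nat)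
    : list instr :=
  match gs with
  | [] => []
  | g :: gs' => F g base pc ++ compile_list F gs' (S base) (pc + length (F g base pc))
  end.

(* Layout: [fr] counts up the recursion index, [S fr] holds the accumulator,
   [fr + 2 ...] the parameters, [fr + n + 1] the number of iterations left and
   [fr + n + 2] the result of the step function. *)
Definition prim_loop (step : nat -> list instr) (n fr lp exit : nat) : list instr :=
  let p7 := S lp + length (step (S lp)) in
  DECJZ (fr + n + 1) exit :: step (S lp) ++ cm_clear (S fr) p7 ++
  cm_move (fr + n + 2) (S fr) (p7 + 2) ++ [INC fr; DECJZ 0 lp].

Definition prim_setup (base : nat -> list instr) (n n' inp fr pc : nat) : list instr :=
  let tmp := fr + n + 3 in
  let c1 := cm_load_list n inp (seq 1 n') (fr + 2) tmp pc in
  let p2 := pc + length c1 in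
  c1 ++ cm_copy inp (fr + n + 1) tmp p2 ++ cm_clear fr (p2 + 11) ++ base (p2 + 13).

Definition prim_code (base step : nat -> list instr) (n n' inp out fr pc : nat)
    : list instr :=
  let lp := pc + length (prim_setup base n n' inp fr pc) in
  let exit := lp + length (step (S lp)) + 8 in
  prim_setup base n n' inp fr pc ++ prim_loop step n fr lp exit ++
  cm_copy (S fr) out (fr + n + 3) exit.

(* Layout: [fr] is the candidate, [S fr ...] the parameters and [fr + n + 1]
   the value of the body. *)
Definition mu_code (body : nat -> list instr) n inp out fr pc :=
  let tmp := fr + n + 2 in
  let c1 := cm_load_list n inp (seq 0 n) (S fr) tmp pc in
  let lp := pc + length c1 + 2 in
  let p4 := lp + length (body lp) in
  c1 ++ cm_clear fr (pc + length c1) ++ body lp ++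
  [DECJZ (fr + n + 1) (p4 + 3); INC fr; DECJZ 0 lp] ++ cm_copy fr out tmp (p4 + 3).

Fixpoint compile (f : rf) (n inp out fr pc : nat) {struct f} : list instr :=
  match f with
  | RZero => cm_clear out pc
  | RSucc => cm_load n inp 0 out fr pc ++ [INC out]
  | RProj i => cm_load n inp i out fr pc
  | RComp h gs =>
      let cg := compile_list (fun g b p => compile g n inp b (fr + length gs) p) gs fr pc in
      cg ++ compile h (length gs) fr out (fr + length gs) (pc + length cg)
  | RPrim f g =>
      match n with
      | 0 => [] (* never evaluated: [RPrim] needs an argument *)
      | S n' => prim_code (fun p => compile f n' (fr + 2) (S fr) (fr + n + 3) p)
                          (fun p => compile g (S n) fr (fr + n + 2) (fr + n + 3) p)
                          n n' inp out fr pc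
      end
  | RMu f => mu_code (fun p => compile f (S n) fr (fr + n + 1) (fr + n + 2) p) n inp out fr pc
  end.

Lemma cm_load_spec P n inp i out fr pc R v :
  length v = n -> 0 < inp -> inp + n <= fr -> out < fr -> 0 < out ->
  (out < inp \/ inp + n <= out) -> R 0 = 0 ->
  (forall k, k < n -> R (inp + k) = nth k v 0) ->
  code_at P pc (cm_load n inp i out fr pc) ->
  exists R', cm_steps P (pc, R) (pc + length (cm_load n inp i out fr pc), R') /\
    R' out = nth i v 0 /\ forall x, x <> out -> x <> fr -> R' x = R x.
Proof.
  intros Hl Hi Hf Ho Ho0 Hd H0 Hin Hc. unfold cm_load in *. destruct (Nat.ltb_spec i n).
  - destruct (cm_copy_spec P pc (inp + i) out fr R Hc) as [R' [S1 [A1 B1]]]; try lia; auto.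
    exists R'. rewrite length_cm_copy. split; auto. split; auto. rewrite A1. auto.
  - destruct (cm_clear_spec P pc out R Hc) as [R' [S1 [A1 B1]]]; try lia; auto.
    exists R'. split; auto. split; auto. rewrite nth_overflow; auto. lia.
Qed.

Lemma cm_load_list_spec P n inp fr v : length v = n -> 0 < inp ->
  forall is base pc R, inp + n <= base -> base + length is <= fr -> R 0 = 0 ->
  (forall k, k < n -> R (inp + k) = nth k v 0) ->
  code_at P pc (cm_load_list n inp is base fr pc) ->
  exists R', cm_steps P (pc, R) (pc + length (cm_load_list n inp is base fr pc), R') /\
    (forall j, j < length is -> R' (base + j) = nth (nth j is 0) v 0) /\
    forall x, x <> fr -> (x < base \/ base + length is <= x) -> R' x = R x.
Proof.
  intros Hl Hi is. induction is as [|i is IH]; intros base pc R Hb Hbf H0 Hin Hc.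
  - exists R. simpl. rewrite Nat.add_0_r. split; [constructor|]. split; intros; auto. simpl in *; lia.
  - simpl in Hc. simpl length in Hbf. destruct (code_at_app _ _ _ _ Hc) as [C1 C2].
    destruct (cm_load_spec P n inp i base fr pc R v) as [R1 [S1 [A1 B1]]]; auto; try lia.
    destruct (IH (S base) _ R1 ltac:(lia) ltac:(lia) ltac:(rewrite B1; auto; lia) ltac:(intros k Hk; rewrite B1; auto; lia) C2)
      as [R2 [S2 [A2 B2]]].
    exists R2. split; [|split].
    + simpl. rewrite length_app, Nat.add_assoc. eapply cm_steps_trans; eauto.
    + intros j Hj. destruct j.
      * rewrite B2 by lia. rewrite Nat.add_0_r. auto.
      * simpl. rewrite <- A2 by (simpl in Hj; lia). f_equal. lia.
    + intros x Hx Hx2. simpl length in Hx2. rewrite B2 by lia. rewrite B1 by lia. auto.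
Qed.

Definition compiles_correctly (f : rf) : Prop := forall P n inp out fr pc R v y,
  eval f v y -> length v = n -> 0 < inp -> inp + n <= fr -> out < fr -> 0 < out ->
  (out < inp \/ inp + n <= out) -> R 0 = 0 ->
  (forall i, i < n -> R (inp + i) = nth i v 0) ->
  code_at P pc (compile f n inp out fr pc) ->
  exists R', cm_steps P (pc, R) (pc + length (compile f n inp out fr pc), R') /\
    R' out = y /\ forall x, x < fr -> x <> out -> R' x = R x.

Lemma evals_length gs v ys : evals gs v ys -> length ys = length gs.
Proof. induction 1; simpl; auto. Qed.

Lemma compile_list_spec P n inp fr v : length v = n -> 0 < inp ->
  forall gs ys, evals gs v ys -> Forall compiles_correctly gs ->
  forall base pc R, inp + n <= base -> base + length gs <= fr -> R 0 = 0 ->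
  (forall k, k < n -> R (inp + k) = nth k v 0) ->
  let code := compile_list (fun g b p => compile g n inp b fr p) gs base pc in
  code_at P pc code ->
  exists R', cm_steps P (pc, R) (pc + length code, R') /\
    (forall j, j < length gs -> R' (base + j) = nth j ys 0) /\
    forall x, x < fr -> (x < base \/ base + length gs <= x) -> R' x = R x.
Proof.
  intros Hl Hi gs ys Hev. induction Hev as [v|g gs v y ys Hg Hgs IH];
    intros HF base pc R Hb Hbf H0 Hin code Hc; subst code.
  - exists R. simpl. rewrite Nat.add_0_r. split; [constructor|]. split; intros; simpl in *; auto. lia.
  - inversion HF as [|? ? Sg SF]; subst. simpl in Hc. simpl length in Hbf.
    destruct (code_at_app _ _ _ _ Hc) as [C1 C2].
    destruct (Sg P (length v) inp base fr pc R v y) as [R1 [S1 [A1 B1]]]; auto; try lia.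
    destruct (IH eq_refl SF (S base) _ R1 ltac:(lia) ltac:(lia) ltac:(rewrite B1; auto; lia)
                 ltac:(intros k Hk; rewrite B1; auto; lia) C2) as [R2 [S2 [A2 B2]]].
    exists R2. split; [|split].
    + simpl. rewrite length_app, Nat.add_assoc. eapply cm_steps_trans; eauto.
    + intros j Hj. destruct j.
      * rewrite B2 by lia. rewrite Nat.add_0_r. auto.
      * simpl. rewrite <- A2 by (simpl in Hj; lia). f_equal. lia.
    + intros x Hx Hx2. simpl length in Hx2. rewrite B2 by lia. rewrite B1 by lia. auto.
Qed.

Section Minimization.

Variables (P : list instr) (body : nat -> list instr) (f : rf) (v : list nat) (fr : nat).
Let n := length v.
Hypothesis fr_pos : 0 < fr.
Hypothesis body_spec : forall p R a z, code_at P p (body p) -> R 0 = 0 ->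
  (forall i, i < S n -> R (fr + i) = nth i (a :: v) 0) -> eval f (a :: v) z ->
  exists R', cm_steps P (p, R) (p + length (body p), R') /\ R' (fr + n + 1) = z /\
    forall x, x < fr + n + 2 -> x <> fr + n + 1 -> R' x = R x.

Lemma mu_loop_spec lp exit R :
  code_at P lp (body lp ++ [DECJZ (fr + n + 1) exit; INC fr; DECJZ 0 lp]) ->
  R 0 = 0 -> R fr = 0 -> (forall i, i < n -> R (S fr + i) = nth i v 0) ->
  forall j, (forall m, m < j -> exists k, eval f (m :: v) (S k)) ->
  exists Rj, cm_steps P (lp, R) (lp, Rj) /\ Rj fr = j /\
    (forall i, i < n -> Rj (S fr + i) = nth i v 0) /\ forall x, x < fr -> Rj x = R x.
Proof.
  intros Hc H0 Hfr Hargs. set (p4 := lp + length (body lp)).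
  destruct (code_at_app _ _ _ _ Hc) as [Cbody Ctail].
  fetch Ctail 0 J0. fetch Ctail 1 J1. fetch Ctail 2 J2. rewrite Nat.add_0_r in J0.
  induction j; intros Hbelow.
  - exists R. repeat split; auto. constructor.
  - destruct IHj as [Rj [Sj [Aj [Bj Dj]]]]; [intros m Hm; apply Hbelow; lia|].
    destruct (Hbelow j) as [k Hk]; [lia|].
    destruct (body_spec lp Rj j (S k) Cbody) as [Ra [Sa [Aa Ba]]]; auto.
    { rewrite Dj by lia. auto. }
    { intros i Hi. destruct i; simpl; [rewrite Nat.add_0_r; auto|].
      rewrite <- Bj by lia. f_equal; lia. }
    set (Rb := set_reg Ra (fr + n + 1) k).
    set (Rc := set_reg Rb fr (S (Rb fr))).
    exists Rc. split; [|split; [|split]].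
    + eapply cm_steps_trans; [exact Sj|]. eapply cm_steps_trans; [exact Sa|].
      eapply cm_steps_trans.
      { apply cm_steps_dec with (r := fr + n + 1) (j := exit) (k := k) (pc' := p4 + 1);
        [exact J0 | exact Aa | unfold p4; lia]. }
      eapply cm_steps_trans. { apply cm_steps_inc with (r := fr) (pc' := p4 + 2); [exact J1 | lia]. }
      apply cm_steps_jump with (r := 0); [exact J2|].
      unfold Rc, Rb. simpl_set_reg. rewrite Ba by lia. rewrite Dj by lia. auto.
    + unfold Rc, Rb. simpl_set_reg. rewrite Ba by lia. lia.
    + intros i Hi. unfold Rc, Rb. simpl_set_reg. rewrite Ba by lia. auto.
    + intros x Hx. unfold Rc, Rb. simpl_set_reg. rewrite Ba by lia. auto.
Qed.

Lemma mu_code_spec inp out pc R y :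
  eval (RMu f) v y -> 0 < inp -> inp + n <= fr -> out < fr -> 0 < out -> R 0 = 0 ->
  (forall i, i < n -> R (inp + i) = nth i v 0) ->
  code_at P pc (mu_code body n inp out fr pc) ->
  exists R', cm_steps P (pc, R) (pc + length (mu_code body n inp out fr pc), R') /\
    R' out = y /\ forall x, x < fr -> x <> out -> R' x = R x.
Proof.
  intros Hev Hi Hif Ho Ho0 H0 Hin Hc.
  inversion Hev as [| | | | | | ? ? ? Hzero Hbelow]; subst.
  unfold mu_code in *. cbv zeta in *.
  set (c1 := cm_load_list n inp (seq 0 n) (S fr) (fr + n + 2) pc) in *.
  set (lp := pc + length c1 + 2) in *.
  set (p4 := lp + length (body lp)) in *.
  destruct (code_at_app _ _ _ _ Hc) as [C1 Hc1].
  destruct (code_at_app _ _ _ _ Hc1) as [C2 Hc2]. simpl length in Hc2.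
  rewrite app_assoc in Hc2. destruct (code_at_app _ _ _ _ Hc2) as [Cloop C4].
  rewrite length_app in C4. simpl length in C4.
  assert (Cloop' : code_at P lp (body lp ++ [DECJZ (fr + n + 1) (p4 + 3); INC fr; DECJZ 0 lp]))
    by (eapply code_at_shift; [exact Cloop | unfold lp; lia]).
  destruct (code_at_app _ _ _ _ Cloop') as [Cbody Ctail]. fetch Ctail 0 J0. rewrite Nat.add_0_r in J0.
  assert (C4' : code_at P (p4 + 3) (cm_copy fr out (fr + n + 2) (p4 + 3)))
    by (eapply code_at_shift; [exact C4 | unfold p4, lp; lia]).
  destruct (cm_load_list_spec P n inp (fr + n + 2) v eq_refl Hi (seq 0 n) (S fr) pc R)
    as [R1 [S1 [A1 B1]]]; auto; try lia.
  { rewrite length_seq. lia. }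
  rewrite length_seq in A1, B1.
  destruct (cm_clear_spec P (pc + length c1) fr R1 C2) as [R2 [S2 [A2 B2]]]; try lia.
  { rewrite B1; auto; lia. }
  destruct (mu_loop_spec lp (p4 + 3) R2 Cloop') with (j := y) as [Ry [Sy [Ay [By Dy]]]]; auto.
  { rewrite B2 by lia. rewrite B1 by lia. auto. }
  { intros i Hi'. rewrite B2 by lia. rewrite A1 by lia. rewrite seq_nth; auto. }
  destruct (body_spec lp Ry y 0 Cbody) as [Ra [Sa [Aa Ba]]]; auto.
  { rewrite Dy by lia. rewrite B2 by lia. rewrite B1 by lia. auto. }
  { intros i Hi'. destruct i; simpl; [rewrite Nat.add_0_r; auto|].
    rewrite <- By by lia. f_equal; lia. }
  destruct (cm_copy_spec P (p4 + 3) fr out (fr + n + 2) Ra C4') as [Rf [Sf [Af Bf]]]; try lia.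
  { rewrite Ba by lia. rewrite Dy by lia. rewrite B2 by lia. rewrite B1 by lia. auto. }
  exists Rf. split; [|split].
  - eapply cm_steps_trans; [exact S1|]. eapply cm_steps_trans; [exact S2|].
    eapply cm_steps_trans; [exact Sy|]. eapply cm_steps_trans; [exact Sa|].
    eapply cm_steps_trans. { apply cm_steps_jump with (r := fr + n + 1); [exact J0 | exact Aa]. }
    match goal with |- cm_steps _ _ (?a, _) => replace a with (p4 + 3 + 11) end; [exact Sf|].
    rewrite !length_app. simpl length. unfold p4, lp. lia.
  - rewrite Af, Ba by lia. auto.
  - intros x Hx Hx2. rewrite Bf by lia. rewrite Ba by lia. rewrite Dy by lia.
    rewrite B2 by lia. rewrite B1 by lia. auto.
Qed.

End Minimization.

Lemma eval_prim_below F G v k y : eval (RPrim F G) (k :: v) y ->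
  forall j, j <= k -> exists z, eval (RPrim F G) (j :: v) z.
Proof.
  revert y. induction k; intros y H j Hj.
  - assert (j = 0) by lia. subst. eauto.
  - destruct (Nat.eq_dec j (S k)); [subst; eauto|].
    inversion H; subst. eapply IHk; eauto. lia.
Qed.

Section PrimitiveRecursion.

Variables (P : list instr) (base step : nat -> list instr) (F G : rf) (v : list nat) (fr : nat).
Let n := S (length v).
Hypothesis fr_pos : 0 < fr.
Hypothesis base_spec : forall p R z, code_at P p (base p) -> R 0 = 0 ->
  (forall i, i < length v -> R (fr + 2 + i) = nth i v 0) -> eval F v z ->
  exists R', cm_steps P (p, R) (p + length (base p), R') /\ R' (S fr) = z /\
    forall x, x < fr + n + 3 -> x <> S fr -> R' x = R x.
Hypothesis step_spec : forall p R a z w, code_at P p (step p) -> R 0 = 0 ->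
  (forall i, i < S n -> R (fr + i) = nth i (a :: z :: v) 0) -> eval G (a :: z :: v) w ->
  exists R', cm_steps P (p, R) (p + length (step p), R') /\ R' (fr + n + 2) = w /\
    forall x, x < fr + n + 3 -> x <> fr + n + 2 -> R' x = R x.

Lemma prim_loop_iteration lp exit Rj k j z :
  code_at P lp (prim_loop step n fr lp exit) -> j < k ->
  eval (RPrim F G) (S j :: v) z -> Rj 0 = 0 -> Rj fr = j -> Rj (fr + n + 1) = k - j ->
  eval (RPrim F G) (j :: v) (Rj (S fr)) ->
  (forall i, i < length v -> Rj (fr + 2 + i) = nth i v 0) ->
  exists Rj', cm_steps P (lp, Rj) (lp, Rj') /\ Rj' fr = S j /\ Rj' (S fr) = z /\
    Rj' (fr + n + 1) = k - S j /\ (forall i, i < length v -> Rj' (fr + 2 + i) = nth i v 0) /\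
    forall x, x < fr -> Rj' x = Rj x.
Proof.
  intros Hc Hj Hz' H0 Aj Bj Hz Dj. unfold prim_loop in Hc.
  set (p7 := S lp + length (step (S lp))) in *.
  fetch Hc 0 J0. rewrite Nat.add_0_r in J0.
  change (DECJZ (fr + n + 1) exit :: step (S lp) ++ _) with
    ([DECJZ (fr + n + 1) exit] ++ step (S lp) ++ cm_clear (S fr) p7 ++
     cm_move (fr + n + 2) (S fr) (p7 + 2) ++ [INC fr; DECJZ 0 lp]) in Hc.
  destruct (code_at_app _ _ _ _ Hc) as [_ Hc1]. simpl length in Hc1.
  destruct (code_at_app _ _ _ _ Hc1) as [Cstep Hc2].
  destruct (code_at_app _ _ _ _ Hc2) as [Cclear Hc3]. simpl length in Hc3.
  destruct (code_at_app _ _ _ _ Hc3) as [Cmove Cjump]. simpl length in Cjump.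
  fetch Cjump 0 J1. fetch Cjump 1 J2.
  assert (Cstep' : code_at P (S lp) (step (S lp))) by (eapply code_at_shift; [exact Cstep | lia]).
  assert (Cclear' : code_at P p7 (cm_clear (S fr) p7))
    by (eapply code_at_shift; [exact Cclear | unfold p7; lia]).
  assert (Cmove' : code_at P (p7 + 2) (cm_move (fr + n + 2) (S fr) (p7 + 2)))
    by (eapply code_at_shift; [exact Cmove | unfold p7; lia]).
  assert (Hg : eval G (j :: Rj (S fr) :: v) z).
  { inversion Hz' as [| | | | |? ? ? ? zz ? Hprev Hgz|]; subst.
    assert (zz = Rj (S fr)) by (eapply eval_functional; eauto). subst. auto. }
  set (Ra := set_reg Rj (fr + n + 1) (k - S j)).
  destruct (step_spec (S lp) Ra j (Rj (S fr)) z Cstep') as [Rb [Sb [Ab Bb]]]; auto.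
  { unfold Ra. simpl_set_reg. auto. }
  { intros i Hi. unfold Ra. simpl_set_reg. destruct i as [|[|i]]; simpl.
    - rewrite Nat.add_0_r. auto.
    - f_equal. lia.
    - rewrite <- Dj by lia. f_equal. lia. }
  destruct (cm_clear_spec P p7 (S fr) Rb Cclear') as [Rc [Sc [Ac Bc]]]; try lia.
  { rewrite Bb by lia. unfold Ra. simpl_set_reg. auto. }
  destruct (cm_move_spec P (p7 + 2) (fr + n + 2) (S fr) Rc Cmove') as [Rd [Sd [Ad [Bd Dd]]]]; try lia.
  { rewrite Bc by lia. rewrite Bb by lia. unfold Ra. simpl_set_reg. auto. }
  assert (Hframe : forall x, x <> S fr -> x < fr + n + 2 -> Rd x = Ra x).
  { intros x Hx1 Hx2. rewrite Dd by lia. rewrite Bc by lia. rewrite Bb by lia. auto. }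
  exists (set_reg Rd fr (S (Rd fr))). split; [|split; [|split; [|split; [|split]]]].
  - eapply cm_steps_trans.
    { apply cm_steps_dec with (r := fr + n + 1) (j := exit) (k := k - S j) (pc' := S lp);
        [exact J0 | lia | lia]. }
    fold Ra. eapply cm_steps_trans; [exact Sb|]. fold p7.
    eapply cm_steps_trans; [exact Sc|]. eapply cm_steps_trans; [exact Sd|].
    eapply cm_steps_trans.
    { apply cm_steps_inc with (r := fr) (pc' := p7 + 6); [rewrite <- J1; f_equal; lia | lia]. }
    apply cm_steps_jump with (r := 0); [rewrite <- J2; f_equal; lia|].
    simpl_set_reg. rewrite Hframe by lia. unfold Ra. simpl_set_reg. auto.
  - simpl_set_reg. rewrite Hframe by lia. unfold Ra. simpl_set_reg. lia.
  - simpl_set_reg. rewrite Bd, Ac. rewrite Bc by lia. rewrite Ab. auto.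
  - simpl_set_reg. rewrite Hframe by lia. unfold Ra. simpl_set_reg. auto.
  - intros i Hi. simpl_set_reg. rewrite Hframe by lia. unfold Ra. simpl_set_reg. auto.
  - intros x Hx. simpl_set_reg. rewrite Hframe by lia. unfold Ra. simpl_set_reg. auto.
Qed.

Lemma prim_loop_spec lp exit R k y : code_at P lp (prim_loop step n fr lp exit) ->
  eval (RPrim F G) (k :: v) y -> R 0 = 0 -> R fr = 0 -> R (fr + n + 1) = k ->
  eval F v (R (S fr)) -> (forall i, i < length v -> R (fr + 2 + i) = nth i v 0) ->
  forall j, j <= k ->
  exists Rj, cm_steps P (lp, R) (lp, Rj) /\ Rj fr = j /\ eval (RPrim F G) (j :: v) (Rj (S fr)) /\
    Rj (fr + n + 1) = k - j /\ (forall i, i < length v -> Rj (fr + 2 + i) = nth i v 0) /\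
    forall x, x < fr -> Rj x = R x.
Proof.
  intros Hc Hev H0 Hfr Hleft Hbase Hargs. induction j; intros Hj.
  - exists R. repeat split; auto; [constructor | constructor; auto | lia].
  - destruct IHj as [Rj [Sj [Aj [Hz [Bj [Dj Fj]]]]]]; [lia|].
    destruct (eval_prim_below F G v k y Hev (S j) Hj) as [z' Hz'].
    destruct (prim_loop_iteration lp exit Rj k j z' Hc) as [Rj' [S' [A' [E' [B' [D' F']]]]]]; auto.
    { rewrite Fj by lia. auto. }
    exists Rj'. repeat split; auto.
    + eapply cm_steps_trans; eauto.
    + rewrite E'. auto.
    + intros x Hx. rewrite F', Fj by lia. auto.
Qed.

Lemma prim_setup_spec inp pc R k :
  0 < inp -> inp + n <= fr -> R 0 = 0 ->
  (forall i, i < n -> R (inp + i) = nth i (k :: v) 0) -> (exists z, eval F v z) ->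
  code_at P pc (prim_setup base n (length v) inp fr pc) ->
  exists R', cm_steps P (pc, R) (pc + length (prim_setup base n (length v) inp fr pc), R') /\
    R' fr = 0 /\ R' (fr + n + 1) = k /\ eval F v (R' (S fr)) /\
    (forall i, i < length v -> R' (fr + 2 + i) = nth i v 0) /\ forall x, x < fr -> R' x = R x.
Proof.
  intros Hi Hif H0 Hin [z Hbase] Hc. unfold prim_setup in *. cbv zeta in *.
  set (c1 := cm_load_list n inp (seq 1 (length v)) (fr + 2) (fr + n + 3) pc) in *.
  set (p2 := pc + length c1) in *.
  destruct (code_at_app _ _ _ _ Hc) as [C1 Hc1].
  destruct (code_at_app _ _ _ _ Hc1) as [C2 Hc2]. rewrite length_cm_copy in Hc2.
  destruct (code_at_app _ _ _ _ Hc2) as [C3 C4]. simpl length in C4.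
  assert (C3' : code_at P (p2 + 11) (cm_clear fr (p2 + 11)))
    by (eapply code_at_shift; [exact C3 | unfold p2; lia]).
  assert (C4' : code_at P (p2 + 13) (base (p2 + 13)))
    by (eapply code_at_shift; [exact C4 | unfold p2; lia]).
  destruct (cm_load_list_spec P n inp (fr + n + 3) (k :: v) ltac:(simpl; lia) Hi
              (seq 1 (length v)) (fr + 2) pc R) as [R1 [S1 [A1 B1]]]; auto; try lia.
  { rewrite length_seq. unfold n. lia. }
  rewrite length_seq in A1, B1.
  destruct (cm_copy_spec P p2 inp (fr + n + 1) (fr + n + 3) R1 C2) as [R2 [S2 [A2 B2]]]; try lia.
  { rewrite B1; auto; lia. }
  destruct (cm_clear_spec P (p2 + 11) fr R2 C3') as [R3 [S3 [A3 B3]]]; try lia.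
  { rewrite B2 by lia. rewrite B1; auto; lia. }
  assert (Hargs : forall i, i < length v -> R3 (fr + 2 + i) = nth i v 0).
  { intros i Hi'. rewrite B3 by lia. rewrite B2 by lia. rewrite A1 by lia.
    rewrite seq_nth by lia. reflexivity. }
  destruct (base_spec (p2 + 13) R3 z C4') as [R4 [S4 [A4 B4]]]; auto.
  { rewrite B3 by lia. rewrite B2 by lia. rewrite B1; auto; lia. }
  exists R4. split; [|split; [|split; [|split; [|split]]]].
  - eapply cm_steps_trans; [exact S1|]. eapply cm_steps_trans; [exact S2|].
    eapply cm_steps_trans; [exact S3|]. replace (p2 + 11 + 2) with (p2 + 13) by lia.
    match goal with |- cm_steps _ _ (?a, _) => replace a with (p2 + 13 + length (base (p2 + 13))) end;
      [exact S4|].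
    unfold p2. rewrite !length_app, length_cm_copy. simpl length. lia.
  - rewrite B4 by lia. auto.
  - rewrite B4 by lia. rewrite B3 by lia. rewrite A2. rewrite B1 by lia.
    specialize (Hin 0). rewrite Nat.add_0_r in Hin. apply Hin. lia.
  - rewrite A4. auto.
  - intros i Hi'. rewrite B4 by lia. auto.
  - intros x Hx. rewrite B4 by lia. rewrite B3 by lia. rewrite B2 by lia. rewrite B1; auto; lia.
Qed.

Lemma prim_code_spec inp out pc R k y :
  eval (RPrim F G) (k :: v) y -> 0 < inp -> inp + n <= fr -> out < fr -> 0 < out -> R 0 = 0 ->
  (forall i, i < n -> R (inp + i) = nth i (k :: v) 0) ->
  code_at P pc (prim_code base step n (length v) inp out fr pc) ->
  exists R', cm_steps P (pc, R) (pc + length (prim_code base step n (length v) inp out fr pc), R') /\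
    R' out = y /\ forall x, x < fr -> x <> out -> R' x = R x.
Proof.
  intros Hev Hi Hif Ho Ho0 H0 Hin Hc.
  unfold prim_code in *. cbv zeta in *.
  set (lp := pc + length (prim_setup base n (length v) inp fr pc)) in *.
  set (exit := lp + length (step (S lp)) + 8) in *.
  destruct (code_at_app _ _ _ _ Hc) as [Csetup Hc1].
  destruct (code_at_app _ _ _ _ Hc1) as [Cloop Ccopy].
  assert (Ccopy' : code_at P exit (cm_copy (S fr) out (fr + n + 3) exit)).
  { eapply code_at_shift; [exact Ccopy|]. unfold exit, prim_loop. cbn [length].
    rewrite !length_app. simpl length. lia. }
  fetch Cloop 0 J0. rewrite Nat.add_0_r in J0.
  destruct (prim_setup_spec inp pc R k) as [R1 [S1 [A1 [B1 [D1 [E1 F1]]]]]]; auto.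
  { destruct (eval_prim_below F G v k y Hev 0 ltac:(lia)) as [z0 Hz0].
    inversion Hz0; eauto. }
  destruct (prim_loop_spec lp exit R1 k y Cloop Hev) with (j := k)
    as [Rk [Sk [Ak [Hk [Bk [Dk Fk]]]]]]; auto.
  { rewrite F1 by lia. auto. }
  assert (Rk (S fr) = y) by (eapply eval_functional; eauto).
  destruct (cm_copy_spec P exit (S fr) out (fr + n + 3) Rk Ccopy') as [Rf [Sf [Af Bf]]]; try lia.
  { rewrite Fk by lia. rewrite F1 by lia. auto. }
  exists Rf. split; [|split].
  - eapply cm_steps_trans; [exact S1|]. eapply cm_steps_trans; [exact Sk|].
    eapply cm_steps_trans. { apply cm_steps_jump with (r := fr + n + 1); [exact J0 | rewrite Bk; lia]. }
    match goal with |- cm_steps _ _ (?a, _) => replace a with (exit + 11) end; [exact Sf|].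
    unfold exit, prim_loop, lp. rewrite !length_app. cbn [length]. rewrite !length_app.
    simpl length. lia.
  - rewrite Af. auto.
  - intros x Hx Hx2. rewrite Bf by lia. rewrite Fk by lia. rewrite F1 by lia. auto.
Qed.

End PrimitiveRecursion.

Lemma compile_spec f : compiles_correctly f.
Proof.
  induction f using rf_nested_ind; unfold compiles_correctly;
    intros P n inp out fr pc R v y Hev Hl Hi Hif Ho Ho0 Hd H0 Hin Hc.
  - inversion Hev; subst. simpl in *.
    destruct (cm_clear_spec P pc out R Hc) as [R' [S1 [A1 B1]]]; try lia; auto.
    exists R'. split; auto.
  - inversion Hev; subst. simpl compile in *.
    destruct (code_at_app _ _ _ _ Hc) as [C1 C2]. fetch C2 0 I0.
    destruct (cm_load_spec P (length v) inp 0 out fr pc R v) as [R1 [S1 [A1 B1]]]; auto.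
    exists (set_reg R1 out (S (R1 out))). split; [|split].
    + rewrite length_app. simpl length. eapply cm_steps_trans; [exact S1|].
      apply cm_steps_inc; [rewrite <- I0; f_equal; lia | lia].
    + rewrite set_reg_same, A1. destruct v; reflexivity.
    + intros x Hx Hx2. rewrite set_reg_other by auto. rewrite B1 by lia. auto.
  - inversion Hev; subst. simpl compile in *.
    destruct (cm_load_spec P (length v) inp i out fr pc R v) as [R1 [S1 [A1 B1]]]; auto.
    exists R1. repeat split; auto. intros x Hx Hx2. rewrite B1 by lia. auto.
  - inversion Hev as [| | |? ? ? ys ? Hevs Hevf| | |]; subst. simpl compile in *.
    set (cg := compile_list (fun g b p => compile g (length v) inp b (fr + length gs) p) gs fr pc) in *.
    destruct (code_at_app _ _ _ _ Hc) as [C1 C2].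
    pose proof (evals_length _ _ _ Hevs) as Hys.
    destruct (compile_list_spec P (length v) inp (fr + length gs) v eq_refl Hi gs ys Hevs H fr pc R)
      as [R1 [S1 [A1 B1]]]; auto; try lia.
    destruct (IHf P (length gs) fr out (fr + length gs) (pc + length cg) R1 ys y)
      as [R2 [S2 [A2 B2]]]; auto; try lia.
    { rewrite B1; auto; lia. }
    exists R2. split; [|split]; auto.
    + rewrite length_app, Nat.add_assoc. eapply cm_steps_trans; eauto.
    + intros x Hx Hx2. rewrite B2 by lia. rewrite B1 by lia. auto.
  - destruct v as [|k v]; [inversion Hev|].
    simpl length in *. subst n. simpl compile in *.
    eapply prim_code_spec; eauto; try lia.
    + intros p R' z Cp Hr0 Hargs Hevf.
      eapply (IHf1 P (length v) (fr + 2) (S fr) (fr + S (length v) + 3) p R' v z); eauto; lia.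
    + intros p R' a z w Cp Hr0 Hargs Hevg.
      eapply (IHf2 P (S (S (length v))) fr (fr + S (length v) + 2) (fr + S (length v) + 3) p R'
                (a :: z :: v) w); eauto; simpl; lia.
  - subst n. simpl compile in *.
    eapply mu_code_spec; eauto; try lia.
    intros p R' a z Cp Hr0 Hargs Hevf.
    eapply (IHf P (S (length v)) fr (fr + length v + 1) (fr + length v + 2) p R' (a :: v) z);
      eauto; simpl; lia.
Qed.

Definition instr_reg (i : instr) : nat := match i with INC r => r | DECJZ r _ => r end.

Definition max_reg (P : list instr) : nat := fold_right (fun i m => max (instr_reg i) m) 0 P.

Lemma instr_reg_le_max_reg P pc i : nth_error P pc = Some i -> instr_reg i <= max_reg P.
Proof.
  revert pc. induction P; intros pc H; destruct pc; simpl in *; try discriminate.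
  - inversion H; subst. lia.
  - specialize (IHP _ H). lia.
Qed.

Lemma nth_error_Some_lt {A} (l : list A) n x : nth_error l n = Some x -> n < length l.
Proof. intros H. apply nth_error_Some. congruence. Qed.

(* The counters of [P] (and the output register 5) are SRT registers
   [0 .. n_counters P - 1]; the next three registers hold the constants
   [1], [-1] and [0]. *)
Definition n_counters (P : list instr) : nat := 6 + max_reg P.
Definition n_sim_regs (P : list instr) : nat := n_counters P + 3.

Definition sim_reg P (R : regs) i : Z :=
  if i <? n_counters P then Z.of_nat (R i)
  else if i =? n_counters P then 1%Z
  else if i =? n_counters P + 1 then (-1)%Z else 0%Z.

Definition sim_regs P (R : regs) : list Z := map (sim_reg P R) (seq 0 (n_sim_regs P)).

Definition is_eq (c : cmp) : bool := match c with CEq => true | _ => false end.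

Definition cmp_of (r d : Z) : cmp :=
  if (r <? d)%Z then CGt else if (r =? d)%Z then CEq else CLt.

Definition tests_of (Rs : list Z) (d : Z) : list cmp := map (fun r => cmp_of r d) Rs.

Definition upd_add P r : list upd :=
  map (fun i => if i =? r then UAdd else UOld) (seq 0 (n_sim_regs P)).
Definition upd_none P : list upd := map (fun _ => UOld) (seq 0 (n_sim_regs P)).

(* States: [pc < length P] simulates instruction [pc], [length P] is the halting
   state, [length P + 1 + pc] completes the decrement started at [pc],
   [2 * length P + 1] is a sink accepting everything and [2 * length P + 2] has
   no transition.  The input value must be [1] for an increment, [0] for a
   zero test and [-1] for a decrement (any other value leads to the sink), and
   in the halting state the input [1] is refused exactly when the output
   register 5 holds [1]. *)
Definition sim_rule P q (l : list cmp) : list upd * nat :=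
  let L := length P in
  let K := n_counters P in
  let sink := (upd_none P, 2 * L + 1) in
  if q <? L then
    match nth_error P q with
    | Some (INC r) => if is_eq (nth K l CLt) then (upd_add P r, S q) else sink
    | Some (DECJZ r j) =>
        if is_eq (nth (K + 2) l CLt) then
          if is_eq (nth r l CLt) then (upd_none P, Nat.min j L) else (upd_none P, L + 1 + q)
        else sink
    | None => sink
    end
  else if q =? L then
    if (is_eq (nth K l CLt) && is_eq (nth 5 l CLt))%bool then (upd_none P, 2 * L + 2) else sink
  else if q <? 2 * L + 1 then
    match nth_error P (q - (L + 1)) with
    | Some (DECJZ r _) => if is_eq (nth (K + 1) l CLt) then (upd_add P r, q - L) else sink
    | _ => sink
    end
  else sink.

Definition sim_trans P q l : trans :=
  mkTrans q 0 l (fst (sim_rule P q l)) 0 0 (snd (sim_rule P q l)).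

Fixpoint all_tests (n : nat) : list (list cmp) :=
  match n with
  | 0 => [[]]
  | S n' => flat_map (fun l => [CGt :: l; CEq :: l; CLt :: l]) (all_tests n')
  end.

Definition sim_delta P : list trans :=
  flat_map (fun q => map (sim_trans P q) (all_tests (n_sim_regs P))) (seq 0 (2 * length P + 2)).

Definition sim_srt P (R : regs) : SRT :=
  mkSRT (2 * length P + 3) 1 1 0 (n_sim_regs P) (sim_regs P R) (sim_delta P).

Lemma all_tests_complete n l : length l = n -> In l (all_tests n).
Proof.
  revert l; induction n; intros l Hl; destruct l; simpl in *; try lia; auto.
  apply in_flat_map. exists l. split; [apply IHn; lia|]. destruct c; simpl; auto.
Qed.

Lemma length_all_tests n l : In l (all_tests n) -> length l = n.
Proof.
  revert l; induction n; intros l H; simpl in *.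
  - destruct H as [<-|[]]; auto.
  - apply in_flat_map in H. destruct H as [l' [H1 H2]]. simpl in H2.
    destruct H2 as [<-|[<-|[<-|[]]]]; simpl; f_equal; auto.
Qed.

Lemma cmp_ok_cmp_of c r d : cmp_ok c r d -> c = cmp_of r d.
Proof.
  unfold cmp_of. destruct c; simpl; intros H.
  - replace (r <? d)%Z with true by (symmetry; apply Z.ltb_lt; lia). auto.
  - subst. rewrite Z.ltb_irrefl, Z.eqb_refl. auto.
  - replace (r <? d)%Z with false by (symmetry; apply Z.ltb_ge; lia).
    replace (r =? d)%Z with false by (symmetry; apply Z.eqb_neq; lia). auto.
Qed.

Lemma cmp_of_ok r d : cmp_ok (cmp_of r d) r d.
Proof.
  unfold cmp_of. destruct (Z.ltb_spec r d); simpl; [lia|]. destruct (Z.eqb_spec r d); simpl; lia.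
Qed.

Lemma tests_ok_tests_of l Rs d : tests_ok l Rs d -> l = tests_of Rs d.
Proof. induction 1; simpl; auto. f_equal; auto. apply cmp_ok_cmp_of; auto. Qed.

Lemma tests_of_ok Rs d : tests_ok (tests_of Rs d) Rs d.
Proof. induction Rs; simpl; constructor; auto. apply cmp_of_ok. Qed.

Lemma is_eq_cmp_of r d : is_eq (cmp_of r d) = (r =? d)%Z.
Proof.
  unfold cmp_of. destruct (Z.ltb_spec r d).
  - simpl. symmetry. apply Z.eqb_neq. lia.
  - destruct (Z.eqb_spec r d); auto.
Qed.

Lemma nth_map_seq {A} (f : nat -> A) N i dflt : i < N -> nth i (map f (seq 0 N)) dflt = f i.
Proof.
  intros H. rewrite nth_indep with (d' := f 0) by (rewrite length_map, length_seq; auto).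
  rewrite map_nth, seq_nth; auto.
Qed.

Lemma is_eq_nth_tests_of P R d i : i < n_sim_regs P ->
  is_eq (nth i (tests_of (sim_regs P R) d) CLt) = (sim_reg P R i =? d)%Z.
Proof.
  intros H. unfold tests_of, sim_regs. rewrite map_map, nth_map_seq; auto. apply is_eq_cmp_of.
Qed.

Lemma update_map_seq g h (l : list nat) d :
  update (map g l) (map h l) d = map (fun i => upd_val (g i) (h i) d) l.
Proof. induction l; simpl; auto. unfold update in *. simpl. f_equal. auto. Qed.

Lemma length_sim_regs P R : length (sim_regs P R) = n_sim_regs P.
Proof. unfold sim_regs. rewrite length_map, length_seq. auto. Qed.

Lemma update_none P Rs d : length Rs = n_sim_regs P -> update (upd_none P) Rs d = Rs.
Proof.
  unfold upd_none. intros <-. generalize 0.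
  induction Rs; intros k; simpl; auto. unfold update in *. simpl. f_equal. auto.
Qed.

Lemma length_sim_rule P q l : length (fst (sim_rule P q l)) = n_sim_regs P.
Proof.
  assert (Hadd : forall r, length (upd_add P r) = n_sim_regs P)
    by (intros; unfold upd_add; rewrite length_map, length_seq; auto).
  assert (Hnone : length (upd_none P) = n_sim_regs P)
    by (unfold upd_none; rewrite length_map, length_seq; auto).
  unfold sim_rule; cbv zeta.
  destruct (q <? length P).
  - destruct (nth_error P q) as [[r|r j]|]; repeat destruct (is_eq _); simpl fst; auto.
  - destruct (q =? length P); [destruct (_ && _)%bool; simpl fst; auto|].
    destruct (q <? _); [|simpl fst; auto].
    destruct (nth_error _ _) as [[r|r j]|]; repeat destruct (is_eq _); simpl fst; auto.
Qed.

Lemma sim_reg_counter P R i : i < n_counters P -> sim_reg P R i = Z.of_nat (R i).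
Proof. intros. unfold sim_reg. replace (i <? n_counters P) with true by (symmetry; apply Nat.ltb_lt; auto). auto. Qed.

Lemma sim_reg_one P R : sim_reg P R (n_counters P) = 1%Z.
Proof. unfold sim_reg. rewrite Nat.ltb_irrefl, Nat.eqb_refl. auto. Qed.

Lemma sim_reg_minus_one P R : sim_reg P R (n_counters P + 1) = (-1)%Z.
Proof.
  unfold sim_reg. replace (n_counters P + 1 <? n_counters P) with false by (symmetry; apply Nat.ltb_ge; lia).
  replace (n_counters P + 1 =? n_counters P) with false by (symmetry; apply Nat.eqb_neq; lia).
  rewrite Nat.eqb_refl. auto.
Qed.

Lemma sim_reg_zero P R : sim_reg P R (n_counters P + 2) = 0%Z.
Proof.
  unfold sim_reg. replace (n_counters P + 2 <? n_counters P) with false by (symmetry; apply Nat.ltb_ge; lia).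
  replace (n_counters P + 2 =? n_counters P) with false by (symmetry; apply Nat.eqb_neq; lia).
  replace (n_counters P + 2 =? n_counters P + 1) with false by (symmetry; apply Nat.eqb_neq; lia). auto.
Qed.

Lemma update_add_sim_regs P R r x d : r < n_counters P -> (Z.of_nat (R r) + d)%Z = Z.of_nat x ->
  update (upd_add P r) (sim_regs P R) d = sim_regs P (set_reg R r x).
Proof.
  intros Hr Hx. unfold upd_add, sim_regs. rewrite update_map_seq. apply map_ext_in. intros i Hi.
  unfold sim_reg. destruct (Nat.eqb_spec i r).
  - subst. rewrite set_reg_same. replace (r <? n_counters P) with true by (symmetry; apply Nat.ltb_lt; auto).
    simpl. lia.
  - rewrite set_reg_other by auto. auto.
Qed.

Lemma sim_step_inv P Ri q Rs a d b c' : step (sim_srt P Ri) (q, Rs) (a, d) b c' ->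
  q < 2 * length P + 2 /\ a = 0 /\
  c' = (snd (sim_rule P q (tests_of Rs d)), update (fst (sim_rule P q (tests_of Rs d))) Rs d).
Proof.
  intros [t [Hin [Hsrc [Hlab [_ [Htest [_ [Hc' [_ [_ Hq']]]]]]]]]].
  simpl in *. unfold sim_delta in Hin. apply in_flat_map in Hin. destruct Hin as [q0 [Hq0 Ht]].
  apply in_map_iff in Ht. destruct Ht as [l [<- Hl]]. unfold sim_trans in *; simpl in *. subst.
  apply tests_ok_tests_of in Htest. subst l. apply in_seq in Hq0.
  destruct c' as [q'' R'']. simpl in *. subst. split; [lia | auto].
Qed.

Lemma sim_step_exists P Ri q Rs d : q < 2 * length P + 2 -> length Rs = n_sim_regs P ->
  exists b c', step (sim_srt P Ri) (q, Rs) (0, d) b c'.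
Proof.
  intros Hq Hl.
  set (c' := (snd (sim_rule P q (tests_of Rs d)), update (fst (sim_rule P q (tests_of Rs d))) Rs d)).
  exists (0, nth 0 (snd c') 0%Z), c', (sim_trans P q (tests_of Rs d)).
  unfold sim_trans; simpl. repeat split; auto.
  - unfold sim_delta. apply in_flat_map. exists q. split; [apply in_seq; lia|].
    apply in_map_iff. exists (tests_of Rs d). split; [reflexivity|].
    apply all_tests_complete. unfold tests_of. rewrite length_map. auto.
  - unfold tests_of. rewrite length_map. auto.
  - apply tests_of_ok.
  - rewrite length_sim_rule. auto.
Qed.

Lemma sim_rule_inc P R pc r d : nth_error P pc = Some (INC r) ->
  sim_rule P pc (tests_of (sim_regs P R) d) =
  if (1 =? d)%Z then (upd_add P r, S pc) else (upd_none P, 2 * length P + 1).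
Proof.
  intros H. pose proof (nth_error_Some_lt _ _ _ H). unfold sim_rule; cbv zeta.
  replace (pc <? length P) with true by (symmetry; apply Nat.ltb_lt; auto). rewrite H.
  rewrite is_eq_nth_tests_of by (unfold n_sim_regs; lia). rewrite sim_reg_one. auto.
Qed.

Lemma sim_rule_decjz P R pc r j d : nth_error P pc = Some (DECJZ r j) ->
  sim_rule P pc (tests_of (sim_regs P R) d) =
  if (0 =? d)%Z then
    if (Z.of_nat (R r) =? d)%Z then (upd_none P, Nat.min j (length P))
    else (upd_none P, length P + 1 + pc)
  else (upd_none P, 2 * length P + 1).
Proof.
  intros H. pose proof (nth_error_Some_lt _ _ _ H). pose proof (instr_reg_le_max_reg _ _ _ H) as Hm.
  simpl in Hm. unfold sim_rule; cbv zeta.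
  replace (pc <? length P) with true by (symmetry; apply Nat.ltb_lt; auto). rewrite H.
  rewrite is_eq_nth_tests_of by (unfold n_sim_regs; lia). rewrite sim_reg_zero.
  rewrite is_eq_nth_tests_of by (unfold n_sim_regs, n_counters; lia).
  rewrite sim_reg_counter by (unfold n_counters; lia). auto.
Qed.

Lemma sim_rule_dec P R pc r j d : nth_error P pc = Some (DECJZ r j) ->
  sim_rule P (length P + 1 + pc) (tests_of (sim_regs P R) d) =
  if ((-1) =? d)%Z then (upd_add P r, S pc) else (upd_none P, 2 * length P + 1).
Proof.
  intros H. pose proof (nth_error_Some_lt _ _ _ H). unfold sim_rule; cbv zeta.
  replace (length P + 1 + pc <? length P) with false by (symmetry; apply Nat.ltb_ge; lia).
  replace (length P + 1 + pc =? length P) with false by (symmetry; apply Nat.eqb_neq; lia).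
  replace (length P + 1 + pc <? 2 * length P + 1) with true by (symmetry; apply Nat.ltb_lt; lia).
  replace (length P + 1 + pc - (length P + 1)) with pc by lia. rewrite H.
  rewrite is_eq_nth_tests_of by (unfold n_sim_regs; lia). rewrite sim_reg_minus_one.
  replace (length P + 1 + pc - length P) with (S pc) by lia. auto.
Qed.

Lemma sim_rule_halted P R d :
  sim_rule P (length P) (tests_of (sim_regs P R) d) =
  if ((1 =? d)%Z && (Z.of_nat (R 5%nat) =? d)%Z)%bool then (upd_none P, 2 * length P + 2)
  else (upd_none P, 2 * length P + 1).
Proof.
  unfold sim_rule; cbv zeta. rewrite Nat.ltb_irrefl, Nat.eqb_refl.
  rewrite is_eq_nth_tests_of by (unfold n_sim_regs; lia). rewrite sim_reg_one.
  rewrite is_eq_nth_tests_of by (unfold n_sim_regs, n_counters; lia).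
  rewrite sim_reg_counter by (unfold n_counters; lia). auto.
Qed.

Lemma sim_rule_sink P l : sim_rule P (2 * length P + 1) l = (upd_none P, 2 * length P + 1).
Proof.
  unfold sim_rule; cbv zeta.
  replace (2 * length P + 1 <? length P) with false by (symmetry; apply Nat.ltb_ge; lia).
  replace (2 * length P + 1 =? length P) with false by (symmetry; apply Nat.eqb_neq; lia).
  rewrite Nat.ltb_irrefl. auto.
Qed.

Definition cm_halts_with P (Ri : regs) (y : nat) : Prop :=
  exists pc R, cm_steps P (0, Ri) (pc, R) /\ nth_error P pc = None /\ R 5 = y.

Inductive sim_inv P (Ri : regs) : config -> Prop :=
  | inv_running pc R : cm_steps P (0, Ri) (pc, R) ->
      sim_inv P Ri (Nat.min pc (length P), sim_regs P R)
  | inv_decrement pc R r j k : cm_steps P (0, Ri) (pc, R) ->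
      nth_error P pc = Some (DECJZ r j) -> R r = S k ->
      sim_inv P Ri (length P + 1 + pc, sim_regs P R)
  | inv_sink Rs : length Rs = n_sim_regs P -> sim_inv P Ri (2 * length P + 1, Rs)
  | inv_dead Rs : cm_halts_with P Ri 1 -> sim_inv P Ri (2 * length P + 2, Rs).

Lemma sim_inv_running_step P Ri pc R a d b c' : cm_steps P (0, Ri) (pc, R) ->
  step (sim_srt P Ri) (Nat.min pc (length P), sim_regs P R) (a, d) b c' -> sim_inv P Ri c'.
Proof.
  intros Hr Hs. destruct (sim_step_inv _ _ _ _ _ _ _ _ Hs) as [_ [_ ->]].
  assert (Sink : sim_inv P Ri (2 * length P + 1, update (upd_none P) (sim_regs P R) d))
    by (apply inv_sink; rewrite update_none; apply length_sim_regs).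
  destruct (Nat.lt_ge_cases pc (length P)) as [Hlt|Hge].
  - rewrite Nat.min_l by lia.
    destruct (nth_error P pc) as [[r|r j]|] eqn:E;
      [| | apply nth_error_None in E; lia].
    + pose proof (instr_reg_le_max_reg _ _ _ E) as Hm. simpl in Hm.
      rewrite (sim_rule_inc _ _ _ _ _ E). destruct (Z.eqb_spec 1 d); [subst d|exact Sink]. simpl.
      rewrite (update_add_sim_regs P R r (S (R r))) by (unfold n_counters; lia).
      replace (S pc) with (Nat.min (S pc) (length P)) by lia.
      apply inv_running. eapply cm_steps_snoc; [exact Hr | constructor; auto].
    + rewrite (sim_rule_decjz _ _ _ _ _ _ E). destruct (Z.eqb_spec 0 d); [subst d|exact Sink].
      destruct (Z.eqb_spec (Z.of_nat (R r)) 0); simpl; rewrite update_none by apply length_sim_regs.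
      * apply inv_running. eapply cm_steps_snoc; [exact Hr | apply cm_jump with r; auto; lia].
      * destruct (R r) as [|k] eqn:Hk; [simpl in *; lia|]. eapply inv_decrement; eauto.
  - rewrite Nat.min_r by lia. rewrite sim_rule_halted.
    destruct (Z.eqb_spec 1 d); destruct (Z.eqb_spec (Z.of_nat (R 5)) d); simpl; try exact Sink.
    apply inv_dead. exists pc, R. split; auto. split; [apply nth_error_None; lia | lia].
Qed.

Lemma sim_inv_step P Ri c a b c' : sim_inv P Ri c -> step (sim_srt P Ri) c a b c' -> sim_inv P Ri c'.
Proof.
  destruct a as [a d]. intros HI Hs. destruct HI as [pc R Hr|pc R r j k Hr E Hk|Rs HRs|Rs Hh].
  - eapply sim_inv_running_step; eauto.
  - destruct (sim_step_inv _ _ _ _ _ _ _ _ Hs) as [_ [_ ->]].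
    rewrite (sim_rule_dec _ _ _ _ _ _ E). destruct (Z.eqb_spec (-1) d); cbn [fst snd].
    + subst d. pose proof (instr_reg_le_max_reg _ _ _ E) as Hm. simpl in Hm.
      pose proof (nth_error_Some_lt _ _ _ E). rewrite (update_add_sim_regs P R r k) by (unfold n_counters; lia).
      replace (S pc) with (Nat.min (S pc) (length P)) by lia.
      apply inv_running. eapply cm_steps_snoc; [exact Hr | eapply cm_dec; eauto].
    + apply inv_sink. rewrite update_none; apply length_sim_regs.
  - destruct (sim_step_inv _ _ _ _ _ _ _ _ Hs) as [_ [_ ->]].
    rewrite sim_rule_sink. cbn [fst snd]. apply inv_sink. rewrite update_none; auto.
  - destruct (sim_step_inv _ _ _ _ _ _ _ _ Hs) as [Hq _]. lia.
Qed.

Lemma sim_inv_live P Ri q Rs : sim_inv P Ri (q, Rs) ->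
  (q < 2 * length P + 2 /\ length Rs = n_sim_regs P) \/ cm_halts_with P Ri 1.
Proof.
  intros HI. inversion HI; subst; auto; left; rewrite ?length_sim_regs; split; auto; try lia.
  match goal with E : nth_error P _ = Some _ |- _ => apply nth_error_Some_lt in E end. lia.
Qed.

Lemma sim_runs_or_halts P Ri s c : sim_inv P Ri c -> Forall (fun a => fst a < 1) s ->
  (exists t, length t = length s /\ run_from (sim_srt P Ri) c s t) \/ cm_halts_with P Ri 1.
Proof.
  revert c. induction s as [|[a d] s IH]; intros [q Rs] HI Hs.
  - left. exists []. split; auto. constructor.
  - inversion Hs as [|? ? Ha Hs']; subst. simpl in Ha. assert (a = 0) by lia. subst a.
    destruct (sim_inv_live _ _ _ _ HI) as [[Hq HL]|Hh]; [|right; auto].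
    destruct (sim_step_exists P Ri q Rs d Hq HL) as [b [c' Hst]].
    destruct (IH c' (sim_inv_step _ _ _ _ _ _ HI Hst) Hs') as [[t [Ht Hr]]|Hh]; [|right; auto].
    left. exists (b :: t). split; [simpl; auto|]. econstructor; eauto.
Qed.

Definition blocked (S : SRT) (c : config) : Prop :=
  exists s, Forall (fun a => fst a < 1) s /\ forall t, ~ run_from S c s t.

Definition sim_config P (c : nat * regs) : config :=
  (Nat.min (fst c) (length P), sim_regs P (snd c)).

Lemma run_from_cons_inv S c a s t : run_from S c (a :: s) t ->
  exists b c' t', step S c a b c' /\ run_from S c' s t'.
Proof. intros H. inversion H; subst. eauto. Qed.

Lemma sim_blocked_halted P Ri pc R : nth_error P pc = None -> R 5 = 1 ->
  blocked (sim_srt P Ri) (sim_config P (pc, R)).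
Proof.
  intros Hh H5. apply nth_error_None in Hh.
  exists [(0, 1%Z); (0, 0%Z)]. split; [repeat constructor; simpl; lia|].
  intros t Hrun. unfold sim_config in Hrun. cbn [fst snd] in Hrun. rewrite Nat.min_r in Hrun by auto.
  destruct (run_from_cons_inv _ _ _ _ _ Hrun) as [b [c' [t' [Hs1 Hr1]]]].
  destruct (sim_step_inv _ _ _ _ _ _ _ _ Hs1) as [_ [_ ->]].
  rewrite sim_rule_halted, H5 in Hr1. simpl in Hr1.
  destruct (run_from_cons_inv _ _ _ _ _ Hr1) as [b2 [c2 [t2 [Hs2 _]]]].
  destruct (sim_step_inv _ _ _ _ _ _ _ _ Hs2) as [Hq _]. lia.
Qed.

Lemma sim_blocked_step P Ri c1 c2 : cm_step P c1 c2 ->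
  blocked (sim_srt P Ri) (sim_config P c2) -> blocked (sim_srt P Ri) (sim_config P c1).
Proof.
  intros Hst [s [Hs Hblock]].
  destruct Hst as [pc R r E|pc R r j E Hr|pc R r j k E Hr];
    pose proof (nth_error_Some_lt _ _ _ E);
    pose proof (instr_reg_le_max_reg _ _ _ E) as Hm; simpl in Hm;
    unfold sim_config in *; cbn [fst snd] in *; rewrite Nat.min_l by lia.
  - exists ((0, 1%Z) :: s). split; [constructor; simpl; auto; lia|].
    intros t Hrun. destruct (run_from_cons_inv _ _ _ _ _ Hrun) as [b [c' [t' [Hs1 Hr1]]]].
    destruct (sim_step_inv _ _ _ _ _ _ _ _ Hs1) as [_ [_ ->]] in Hr1.
    rewrite (sim_rule_inc _ _ _ _ _ E) in Hr1. cbn [fst snd Z.eqb Pos.eqb] in Hr1.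
    rewrite (update_add_sim_regs P R r (S (R r))) in Hr1 by (unfold n_counters; lia).
    rewrite Nat.min_l in Hblock by lia. eapply Hblock; eauto.
  - exists ((0, 0%Z) :: s). split; [constructor; simpl; auto; lia|].
    intros t Hrun. destruct (run_from_cons_inv _ _ _ _ _ Hrun) as [b [c' [t' [Hs1 Hr1]]]].
    destruct (sim_step_inv _ _ _ _ _ _ _ _ Hs1) as [_ [_ ->]] in Hr1.
    rewrite (sim_rule_decjz _ _ _ _ _ _ E), Hr in Hr1. cbn [fst snd Z.eqb Z.of_nat] in Hr1.
    rewrite update_none in Hr1 by apply length_sim_regs. eapply Hblock; eauto.
  - exists ((0, 0%Z) :: (0, (-1)%Z) :: s). split; [repeat constructor; simpl; auto; lia|].
    intros t Hrun. destruct (run_from_cons_inv _ _ _ _ _ Hrun) as [b [c' [t' [Hs1 Hr1]]]].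
    destruct (sim_step_inv _ _ _ _ _ _ _ _ Hs1) as [_ [_ ->]] in Hr1.
    rewrite (sim_rule_decjz _ _ _ _ _ _ E), Hr in Hr1. cbn [fst snd Z.eqb] in Hr1.
    replace (Z.of_nat (S k) =? 0)%Z with false in Hr1 by (symmetry; apply Z.eqb_neq; lia).
    cbn [fst snd] in Hr1. rewrite update_none in Hr1 by apply length_sim_regs.
    destruct (run_from_cons_inv _ _ _ _ _ Hr1) as [b2 [c2 [t2 [Hs2 Hr2]]]].
    destruct (sim_step_inv _ _ _ _ _ _ _ _ Hs2) as [_ [_ ->]] in Hr2.
    rewrite (sim_rule_dec _ _ _ _ _ _ E) in Hr2. cbn [fst snd Z.eqb Pos.eqb] in Hr2.
    rewrite (update_add_sim_regs P R r k) in Hr2 by (unfold n_counters; lia).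
    rewrite Nat.min_l in Hblock by lia. eapply Hblock; eauto.
Qed.

Lemma sim_blocked_of_halts P Ri : cm_halts_with P Ri 1 -> blocked (sim_srt P Ri) (0, sim_regs P Ri).
Proof.
  intros [pc [R [Hr [Hh H5]]]]. change (0, sim_regs P Ri) with (sim_config P (0, Ri)).
  remember (pc, R) as c eqn:Hc. induction Hr as [c|c1 c2 c3 Hst _ IH]; subst.
  - apply sim_blocked_halted; auto.
  - eapply sim_blocked_step; eauto.
Qed.

Lemma combine_split {A B} (s : list A) (t : list B) : length t = length s ->
  map fst (combine s t) = s /\ map snd (combine s t) = t.
Proof.
  revert t; induction s; intros t Ht; destruct t; simpl in *; try lia; auto.
  destruct (IHs t) as [H1 H2]; [lia|]. rewrite H1, H2. auto.
Qed.

Theorem sim_srt_reactive_iff P Ri : reactive (sim_srt P Ri) <-> ~ cm_halts_with P Ri 1.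
Proof.
  split.
  - intros Hreact Hh. destruct (sim_blocked_of_halts P Ri Hh) as [s [Hs Hblock]].
    destruct (Hreact s Hs) as [t [Hlen Hsem]]. unfold sem in Hsem.
    destruct (combine_split s t Hlen) as [E1 E2]. rewrite E1, E2 in Hsem. exact (Hblock t Hsem).
  - intros Hnh s Hs.
    destruct (sim_runs_or_halts P Ri s (0, sim_regs P Ri) (inv_running P Ri 0 Ri (cm_refl P _)) Hs)
      as [[t [Hlen Hrun]]|Hh]; [|contradiction].
    exists t. split; auto. unfold sem.
    destruct (combine_split s t Hlen) as [E1 E2]. rewrite E1, E2. exact Hrun.
Qed.

Lemma sim_rule_target_le P q l : snd (sim_rule P q l) <= 2 * length P + 2.
Proof.
  unfold sim_rule; cbv zeta.
  destruct (Nat.ltb_spec q (length P)).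
  - destruct (nth_error P q) as [[r|r j]|]; repeat destruct (is_eq _); simpl snd; lia.
  - destruct (q =? length P); [destruct (_ && _)%bool; simpl snd; lia|].
    destruct (Nat.ltb_spec q (2 * length P + 1)); [|simpl snd; lia].
    destruct (nth_error _ _) as [[r|r j]|]; repeat destruct (is_eq _); simpl snd; lia.
Qed.

Lemma in_sim_delta P t : In t (sim_delta P) ->
  exists q l, q < 2 * length P + 2 /\ In l (all_tests (n_sim_regs P)) /\ t = sim_trans P q l.
Proof.
  unfold sim_delta. intros H. apply in_flat_map in H. destruct H as [q [Hq Ht]].
  apply in_map_iff in Ht. destruct Ht as [l [<- Hl]]. apply in_seq in Hq. exists q, l. split; [lia|auto].
Qed.

Lemma wf_sim_srt P Ri : wf_SRT (sim_srt P Ri).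
Proof.
  unfold wf_SRT; simpl. split; [lia|]. split; [apply length_sim_regs|].
  apply Forall_forall. intros t Ht. destruct (in_sim_delta _ _ Ht) as [q [l [Hq [Hl ->]]]].
  unfold sim_trans; simpl. pose proof (sim_rule_target_le P q l). pose proof (length_all_tests _ _ Hl).
  rewrite length_sim_rule. unfold n_sim_regs in *. repeat split; lia.
Qed.

Lemma deterministic_sim_srt P Ri : deterministic (sim_srt P Ri).
Proof.
  intros t1 t2 H1 H2 Hne Heq. simpl in H1, H2.
  destruct (in_sim_delta _ _ H1) as [q1 [l1 [_ [_ ->]]]].
  destruct (in_sim_delta _ _ H2) as [q2 [l2 [_ [_ ->]]]].
  unfold sim_trans in Heq; simpl in Heq. inversion Heq; subst. apply Hne. reflexivity.
Qed.

Lemma cm_halts_with_functional P Ri y y' : cm_halts_with P Ri y -> cm_halts_with P Ri y' -> y = y'.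
Proof.
  intros [pc [R [Hr [Hh H5]]]] [pc' [R' [Hr' [Hh' H5']]]].
  assert (Heq : (pc, R) = (pc', R')) by (eapply cm_halted_unique; eauto). congruence.
Qed.

Definition diag_machine (p : rf) : list instr := compile (RComp p [rf_encode_SRT]) 4 1 5 6 0.

Definition diag_regs (P : list instr) : regs := fun i =>
  nth i [0; 2 * length P + 3; n_sim_regs P; enc_list enc_trans (sim_delta P); n_counters P - 5] 0.

Lemma sim_regs_diag_regs P : let a := n_counters P - 5 in
  sim_regs P (diag_regs P) =
  map Z.of_nat [0; 2 * length P + 3; n_sim_regs P; enc_list enc_trans (sim_delta P); a]
  ++ repeat 0%Z a ++ [1; -1; 0]%Z.
Proof.
  intros a. unfold sim_regs. replace (n_sim_regs P) with (5 + (a + 3)) at 1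
    by (unfold a, n_sim_regs, n_counters; lia).
  rewrite !seq_app, !map_app. apply (f_equal2 (@app Z)); [|apply (f_equal2 (@app Z))].
  - simpl seq. simpl map. rewrite !sim_reg_counter by (unfold n_counters; lia). reflexivity.
  - rewrite <- (length_seq a (0 + 5)) at 2. rewrite <- map_const. apply map_ext_in.
    intros i Hi. apply in_seq in Hi. rewrite sim_reg_counter by (unfold a, n_counters in *; lia).
    unfold diag_regs. rewrite nth_overflow by (simpl; lia). reflexivity.
  - replace (0 + 5 + a) with (n_counters P) by (unfold a, n_counters; lia). simpl seq.
    replace (S (n_counters P)) with (n_counters P + 1) by lia.
    replace (S (n_counters P + 1)) with (n_counters P + 2) by lia.
    simpl map. rewrite sim_reg_one, sim_reg_minus_one, sim_reg_zero. reflexivity.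
Qed.

(* [P] is kept abstract so that type checking never unfolds the compiled code. *)
Lemma diag_machine_halts p P y : P = diag_machine p ->
  eval p [encode_SRT (sim_srt P (diag_regs P))] y -> cm_halts_with P (diag_regs P) y.
Proof.
  intros HP Hp.
  assert (Hev : eval (RComp p [rf_encode_SRT])
                  [2 * length P + 3; n_sim_regs P; enc_list enc_trans (sim_delta P); n_counters P - 5] y).
  { econstructor; [|exact Hp]. apply evs_cons; [|apply evs_nil].
    apply (eval_encode_SRT (sim_srt P (diag_regs P))); [reflexivity..|].
    apply sim_regs_diag_regs. }
  assert (Hcode : code_at P 0 (compile (RComp p [rf_encode_SRT]) 4 1 5 6 0))
    by (rewrite HP; intros i x E; exact E).
  assert (Hlen : length (compile (RComp p [rf_encode_SRT]) 4 1 5 6 0) = length P)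
    by (rewrite HP; reflexivity).
  destruct (compile_spec _ P 4 1 5 6 0 (diag_regs P) _ y Hev) as [R [Hr [H5 _]]];
    [reflexivity | lia | lia | lia | lia | lia | reflexivity | | exact Hcode |].
  - intros i Hi. destruct i as [|[|[|[|i]]]]; reflexivity || lia.
  - rewrite Nat.add_0_l, Hlen in Hr. exists (length P), R.
    repeat split; auto. apply nth_error_None. lia.
Qed.

Theorem theorem5p12 :
  ~ exists p : rf,
      forall S : SRT, wf_SRT S -> deterministic S ->
        (reactive S -> eval p [encode_SRT S] 1) /\
        (~ reactive S -> eval p [encode_SRT S] 0).
Proof.
  intros [p Hp].
  remember (diag_machine p) as P eqn:HP.
  pose proof (fun y => diag_machine_halts p P y HP) as Hhalts.
  destruct (Hp (sim_srt P (diag_regs P)) (wf_sim_srt _ _) (deterministic_sim_srt _ _)) as [Hyes Hno].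
  assert (Hnot : ~ reactive (sim_srt P (diag_regs P))).
  { intros Hr. exact (proj1 (sim_srt_reactive_iff _ _) Hr (Hhalts 1 (Hyes Hr))). }
  apply Hnot, sim_srt_reactive_iff. intros Hone.
  discriminate (cm_halts_with_functional _ _ _ _ Hone (Hhalts 0 (Hno Hnot))).
Qed.
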